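(* There exists a function $\rho$ from the set of all (finite) instruction sequences to the set of closed terms of BTA extended with explicit substitution such that for every instruction sequence $P$: $\mathrm{elim}(\rho(P))$ is identical to $|P|$, and $\mathrm{size}(\rho(P))\le 4\cdot\mathrm{len}(P)+1$.
   Context: Fix a set of basic instructions (actions). A primitive instruction is one of: $a$, $+a$, $-a$ (for a basic instruction $a$), $\#l$ ($l\in\mathbb N$), or $!$. An instruction sequence is a finite nonempty sequence $P=u_1;\dots;u_k$ of primitive instructions; $\mathrm{len}(P)=k$. Terms of BTA with explicit substitution: fix a countably infinite set of variables; terms are variables $x$, the constants $S$ (termination) and $D$ (deadlock), postconditional compositions $p\trianglelefteq a\trianglerighteq q$ for terms $p,q$ and basic instruction $a$, and substitutions $[p/x]q$ for terms $p,q$ and variable $x$. Write $a\circ p$ for $p\trianglelefteq a\trianglerighteq p$. A term is closed if it has no variable occurrences outside the bound position of substitution... more precisely, closed means $\mathrm{elim}$ of it contains no variables. Size: $\mathrm{size}(x)=\mathrm{size}(S)=\mathrm{size}(D)=1$, $\mathrm{size}(p\trianglelefteq a\trianglerighteq q)=\mathrm{size}(p)+\mathrm{size}(q)+1$, $\mathrm{size}([p/x]q)=\mathrm{size}(p)+\mathrm{size}(q)+1$. Substitution elimination $\mathrm{elim}$: $\mathrm{elim}(x)=x$, $\mathrm{elim}(S)=S$, $\mathrm{elim}(D)=D$, $\mathrm{elim}(p\trianglelefteq a\trianglerighteq q)=\mathrm{elim}(p)\trianglelefteq a\trianglerighteq\mathrm{elim}(q)$, and $\mathrm{elim}([p/x]q)$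 is obtained from $\mathrm{elim}(q)$ by replacing every occurrence of $x$ by $\mathrm{elim}(p)$ (this corresponds to the axioms $[p/x]x=p$, $[p/x]y=y$ for $y\ne x$, $[p/x]S=S$, $[p/x]D=D$, $[p/x](q\trianglelefteq a\trianglerighteq r)=([p/x]q)\trianglelefteq a\trianglerighteq([p/x]r)$). Thread extraction $|\cdot|$ maps instruction sequences to substitution-free closed terms by: $|a|=a\circ D$; $|a;Y|=a\circ|Y|$; $|+a|=a\circ D$; $|+a;Y|=|Y|\trianglelefteq a\trianglerighteq|\#2;Y|$; $|-a|=a\circ D$; $|-a;Y|=|\#2;Y|\trianglelefteq a\trianglerighteq|Y|$; $|\#l|=D$; $|\#0;Y|=D$; $|\#1;Y|=|Y|$; $|\#(l+2);u|=D$ for a primitive instruction $u$; $|\#(l+2);u;Y|=|\#(l+1);Y|$; $|!|=S$; $|!;Y|=S$. *)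

From Stdlib Require Import List Arith.
Import ListNotations.
Set Implicit Arguments.

Section Defs.
Variable A : Type. (* the set of basic instructions *)

Inductive prim : Type :=
| PBasic : A -> prim
| PPos   : A -> prim
| PNeg   : A -> prim
| PJump  : nat -> prim
| PHalt  : prim.

(* instruction sequences: finite nonempty lists (nonemptiness is imposed
   as a hypothesis where needed) *)
Definition iseq := list prim.
Definition len (P : iseq) : nat := length P.

Inductive term : Type :=
| TVar : nat -> term
| TS : term                             (* termination S *)
| TD : term                             (* deadlock D *)
| TPC : term -> A -> term -> term       (* p <| a |> q *)
| TSub : term -> nat -> term -> term.   (* [p/x]q *)

Definition tseq (a : A) (p : term) : term := TPC p a p.

Fixpoint tsize (t : term) : nat :=
  match t with
  | TVar _ | TS | TD => 1
  | TPC p _ q => tsize p + tsize q + 1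
  | TSub p _ q => tsize p + tsize q + 1
  end.

Fixpoint replace (x : nat) (s t : term) : term :=
  match t with
  | TVar y => if Nat.eqb y x then s else TVar y
  | TS => TS
  | TD => TD
  | TPC p a q => TPC (replace x s p) a (replace x s q)
  | TSub p y q => TSub (replace x s p) y (replace x s q)
  end.

Fixpoint elim (t : term) : term :=
  match t with
  | TVar x => TVar x
  | TS => TS
  | TD => TD
  | TPC p a q => TPC (elim p) a (elim q)
  | TSub p x q => replace x (elim p) (elim q)
  end.

Fixpoint has_var (t : term) : bool :=
  match t with
  | TVar _ => true
  | TS | TD => false
  | TPC p _ q | TSub p _ q => has_var p || has_var q
  end.

Definition closed (t : term) : Prop := has_var (elim t) = false.

(* thread extraction |P|; the inner fixpoint [jmp l Y] computes |#l;Y| *)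
Fixpoint extr (P : iseq) : term :=
  let fix jmp (l : nat) (Y : iseq) : term :=
    match l with
    | 0 => TD
    | 1 => match Y with
           | [] => TD
           | _ => extr Y
           end
    | S (S k) => match Y with
           | [] => TD
           | [_] => TD
           | _ :: Y' => jmp (S k) Y'
           end
    end in
  match P with
  | [] => TD   (* not an instruction sequence; irrelevant *)
  | [u] => match u with
           | PBasic a | PPos a | PNeg a => tseq a TD
           | PJump _ => TD
           | PHalt => TS
           end
  | u :: Y => match u with
           | PBasic a => tseq a (extr Y)
           | PPos a => TPC (extr Y) a (jmp 2 Y)
           | PNeg a => TPC (jmp 2 Y) a (extr Y)
           | PJump l => jmp l Y
           | PHalt => TS
           end
  end.

End Defs.

(* For P = u_0; ...; u_(k-1) let the variable x_j stand for the thread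
   |u_j; ...; u_(k-1)|.  Each u_n is translated into a term [instr_term k n u_n]
   of size at most 3 that expresses |u_n; ...| through x_(n+1), x_(n+2) or
   x_(n+l) (a jump, or a test skipping one instruction); references past the
   end of P become D.  The representation is
       rho P = [t_(k-1)/x_(k-1)] ( ... ([t_1/x_1] t_0) ... ),
   whose size is at most 3 + 4 (k - 1) <= 4 k + 1.

   Correctness is an invariant about [instantiate P n t], which replaces each
   x_j with n <= j < k in t by the actual thread |u_j; ...|: eliminating the
   substitutions for positions n, n+1, ... of a partially built term q yields
   [instantiate P n (elim q)]. *)

From Stdlib Require Import List Arith Lia Bool.
Import ListNotations.
Set Implicit Arguments.

Section Representation.
Variable A : Type.

Definition jump_thread (l : nat) (Y : iseq A) : term A :=
  match l with 0 => TD A | S m => extr (skipn m Y) end.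

Lemma extr_jump_fix (l : nat) (Y : iseq A) :
  (fix jmp (l : nat) (Y : iseq A) : term A :=
     match l with
     | 0 => TD A
     | 1 => match Y with [] => TD A | _ => extr Y end
     | S (S k) => match Y with
                  | [] => TD A
                  | [_] => TD A
                  | _ :: Y' => jmp (S k) Y'
                  end
     end) l Y = jump_thread l Y.
Proof.
  revert l; induction Y as [|u Y IH]; intros [|[|k]]; try reflexivity.
  destruct Y as [|v Y]; [now destruct k|].
  exact (IH (S k)).
Qed.

(* One-step unfolding of thread extraction, uniform in whether Y is empty
   (|u| and |u;[]| agree because the extraction of [] is D). *)
Lemma extr_cons (u : prim A) (Y : iseq A) :
  extr (u :: Y) =
  match u with
  | PBasic a => tseq a (extr Y)
  | PPos a => TPC (extr Y) a (extr (skipn 1 Y))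
  | PNeg a => TPC (extr (skipn 1 Y)) a (extr Y)
  | PJump _ l => jump_thread l Y
  | PHalt _ => TS A
  end.
Proof.
  destruct Y as [|v Y].
  - destruct u as [a|a|a|[|[|m]]|]; reflexivity.
  - change (extr (skipn 1 (v :: Y))) with (jump_thread 2 (v :: Y)).
    destruct u; rewrite <- ?extr_jump_fix; reflexivity.
Qed.

Lemma extr_no_var (P : iseq A) : has_var (extr P) = false.
Proof.
  remember (length P) as N eqn:HN; revert P HN.
  induction N as [N IH] using lt_wf_ind; intros [|u Y] HN; [reflexivity|].
  assert (Hsuf : forall m, has_var (extr (skipn m Y)) = false).
  { intros m. apply (IH (length (skipn m Y))); [|reflexivity].
    rewrite length_skipn; simpl in HN; lia. }
  pose proof (Hsuf 0) as HY; simpl in HY.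
  rewrite extr_cons.
  destruct u as [a|a|a|[|m]|]; cbn [has_var jump_thread tseq];
    rewrite ?HY, ?Hsuf; reflexivity.
Qed.

Lemma skipn_past (P : iseq A) (n m : nat) (u : prim A) (Y : iseq A) :
  skipn n P = u :: Y -> skipn (S n + m) P = skipn m Y.
Proof.
  intros H. replace (S n + m) with (m + 1 + n) by lia.
  now rewrite <- !skipn_skipn, H.
Qed.

Lemma skipn_cons_lt (P : iseq A) (n : nat) (u : prim A) (Y : iseq A) :
  skipn n P = u :: Y -> n < length P.
Proof.
  intros H. pose proof (length_skipn n P) as E. rewrite H in E; simpl in E; lia.
Qed.

Definition placeholder (k j : nat) : term A :=
  if j <? k then TVar A j else TD A.

Definition instr_term (k n : nat) (u : prim A) : term A :=
  match u with
  | PBasic a => tseq a (placeholder k (S n))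
  | PPos a => TPC (placeholder k (S n)) a (placeholder k (S (S n)))
  | PNeg a => TPC (placeholder k (S (S n))) a (placeholder k (S n))
  | PJump _ 0 => TD A
  | PJump _ (S m) => placeholder k (n + S m)
  | PHalt _ => TS A
  end.

Fixpoint chain (k n : nat) (Y : iseq A) (q : term A) : term A :=
  match Y with
  | [] => q
  | u :: Y' => chain k (S n) Y' (TSub (instr_term k n u) n q)
  end.

Definition rho (P : iseq A) : term A :=
  match P with
  | [] => TD A
  | u :: Y => chain (length P) 1 Y (instr_term (length P) 0 u)
  end.

Lemma elim_instr_term (k n : nat) (u : prim A) :
  elim (instr_term k n u) = instr_term k n u.
Proof.
  destruct u as [a|a|a|[|m]|]; cbn; unfold placeholder;
    repeat match goal with |- context [?x <? ?y] => destruct (x <? y) end;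
    reflexivity.
Qed.

Lemma size_instr_term (k n : nat) (u : prim A) : tsize (instr_term k n u) <= 3.
Proof.
  destruct u as [a|a|a|[|m]|]; cbn; unfold placeholder;
    repeat match goal with |- context [?x <? ?y] => destruct (x <? y) end;
    cbn; lia.
Qed.

(* Each substitution step adds at most 4 symbols. *)
Lemma size_chain (k n : nat) (Y : iseq A) (q : term A) :
  tsize (chain k n Y q) <= tsize q + 4 * length Y.
Proof.
  revert n q; induction Y as [|u Y IH]; intros n q; cbn [chain length]; [lia|].
  specialize (IH (S n) (TSub (instr_term k n u) n q)); cbn [tsize] in IH.
  pose proof (size_instr_term k n u); lia.
Qed.

Section Instantiation.
Variable P : iseq A.

Fixpoint instantiate (n : nat) (t : term A) : term A :=
  match t with
  | TVar _ j =>
      if (n <=? j) && (j <? length P) then extr (skipn j P) else TVar A j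
  | TS _ => TS A
  | TD _ => TD A
  | TPC p a q => TPC (instantiate n p) a (instantiate n q)
  | TSub p x q => TSub (instantiate n p) x (instantiate n q)
  end.

Lemma instantiate_past_end (n : nat) (t : term A) :
  length P <= n -> instantiate n t = t.
Proof.
  intros Hn; induction t as [j| | |p IHp a q IHq|p IHp x q IHq];
    cbn [instantiate]; try congruence.
  destruct (Nat.leb_spec n j), (Nat.ltb_spec j (length P)); cbn [andb];
    try reflexivity; lia.
Qed.

Lemma instantiate_replace (n : nat) (b t : term A) :
  n < length P -> instantiate (S n) b = extr (skipn n P) ->
  instantiate (S n) (replace n b t) = instantiate n t.
Proof.
  intros Hn Hb; induction t as [j| | |p IHp a q IHq|p IHp x q IHq];
    cbn [replace instantiate]; try congruence.
  destruct (Nat.eqb_spec j n) as [->|Hjn].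
  - rewrite Hb, Nat.leb_refl; apply Nat.ltb_lt in Hn; now rewrite Hn.
  - cbn [instantiate].
    destruct (Nat.leb_spec (S n) j), (Nat.leb_spec n j); cbn; try reflexivity; lia.
Qed.

(* A placeholder beyond the boundary denotes the thread of its suffix
   (the empty suffix yields D, matching a jump past the end). *)
Lemma instantiate_placeholder (n j : nat) :
  S n <= j -> instantiate (S n) (placeholder (length P) j) = extr (skipn j P).
Proof.
  intros Hj; unfold placeholder.
  destruct (Nat.ltb_spec j (length P)) as [Hlt|Hge]; cbn [instantiate].
  - destruct (Nat.leb_spec (S n) j); [|lia].
    apply Nat.ltb_lt in Hlt; now rewrite Hlt.
  - now rewrite skipn_all2 by lia.
Qed.

Lemma instr_term_correct (n : nat) (u : prim A) (Y : iseq A) :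
  skipn n P = u :: Y ->
  instantiate (S n) (instr_term (length P) n u) = extr (u :: Y).
Proof.
  intros H.
  assert (Hnext : forall m, extr (skipn (S n + m) P) = extr (skipn m Y))
    by (intros m; now rewrite (skipn_past P n m H)).
  pose proof (Hnext 0) as H1; pose proof (Hnext 1) as H2.
  rewrite Nat.add_0_r in H1; replace (S n + 1) with (S (S n)) in H2 by lia.
  rewrite extr_cons.
  destruct u as [a|a|a|[|m]|]; cbn [instr_term instantiate jump_thread tseq];
    rewrite ?instantiate_placeholder by lia; rewrite ?H1, ?H2; try reflexivity.
  replace (n + S m) with (S n + m) by lia; apply Hnext.
Qed.

Lemma elim_chain (n : nat) (Y : iseq A) (q : term A) :
  skipn n P = Y -> elim (chain (length P) n Y q) = instantiate n (elim q).
Proof.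
  revert n q; induction Y as [|u Y IH]; intros n q H; cbn [chain].
  - rewrite instantiate_past_end; [reflexivity|].
    pose proof (length_skipn n P) as E; rewrite H in E; cbn in E; lia.
  - rewrite IH by (pose proof (skipn_past P n 0 H) as E;
                    now rewrite Nat.add_0_r in E).
    cbn [elim]; rewrite elim_instr_term.
    apply instantiate_replace; [exact (skipn_cons_lt P n H)|].
    rewrite (instr_term_correct n H); now rewrite H.
Qed.

End Instantiation.

Lemma elim_rho (P : iseq A) : P <> [] -> elim (rho P) = extr P.
Proof.
  destruct P as [|u Y]; [congruence|]; intros _; unfold rho.
  rewrite elim_chain by reflexivity; rewrite elim_instr_term.
  now apply instr_term_correct.
Qed.

Lemma size_rho (P : iseq A) : P <> [] -> tsize (rho P) <= 4 * len P + 1.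
Proof.
  destruct P as [|u Y]; [congruence|]; intros _; unfold rho, len.
  pose proof (size_chain (length (u :: Y)) 1 Y (instr_term (length (u :: Y)) 0 u)).
  pose proof (size_instr_term (length (u :: Y)) 0 u).
  cbn [length] in *; lia.
Qed.

End Representation.

Theorem theoremA (A : Type) :
  exists rho : iseq A -> term A,
    forall P : iseq A, P <> nil ->
      closed (rho P) /\ elim (rho P) = extr P /\
      tsize (rho P) <= 4 * len P + 1.
Proof.
  exists (@rho A); intros P HP.
  split; [|split].
  - unfold closed; rewrite elim_rho by exact HP; apply extr_no_var.
  - exact (elim_rho HP).
  - exact (size_rho HP).
Qed.
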